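(* Let $\Gamma_a(V)$ be the augmented Dynkin graph of $V$. (i) If $u,v$ are monomials such that $p_{ij}=p_{ji}=1$ for all $x_i\in\mu(u)$, $x_j\in\mu(v)$ with $i\neq j$, then $[u,v]^-=0$. (ii) Let $m\ge2$, $h_1,\dots,h_m\in\{x_1,\dots,x_n\}$ and $u=h_1\cdots h_m$. If either $|\mu(u)|=1$ or the subgraph of $\Gamma_a(V)$ induced on $\{i:x_i\in\mu(u)\}$ is disconnected, then $\sigma(h_1,\dots,h_m)=0$ for every full bracketing $\sigma$ of $h_1,\dots,h_m$ (in this order) by $[\,,\,]^-$.
   Context: $V$ is a braided vector space of diagonal type over an algebraically closed field of characteristic $0$ with basis $x_1,\dots,x_n$, braiding $C(x_i\otimes x_j)=q_{ij}x_j\otimes x_i$, Nichols algebra $\mathfrak{B}(V)$; $p_{ij}:=q_{ij}$. $[a,b]^-:=ab-ba$. The augmented Dynkin graph $\Gamma_a(V)$ has vertex set $\{1,\dots,n\}$ and an (undirected) edge $\{i,j\}$, $i\neq j$, iff $p_{ij}\neq1$ or $p_{ji}\neq1$. Monomials are words in $x_1,\dots,x_n$ viewed in $\mathfrak{B}(V)$; $\mu(u)$ is the set of letters of $u$. *)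

From HB Require Import structures.
From mathcomp Require Import all_boot all_order all_algebra all_fingroup.
Set Implicit Arguments. Unset Strict Implicit. Unset Printing Implicit Defensive.
Import GRing.Theory.
Local Open Scope ring_scope.

(* Braided vector space of diagonal type with basis x_0,...,x_{n-1}
   (indexed by 'I_n) and braiding matrix q : C(x_i (x) x_j) = q i j x_j (x) x_i.

   Elements of the tensor algebra T(V) are represented as formal linear
   combinations of words: a word (seq 'I_n) is the monomial x_{w_1}...x_{w_d}. *)

Definition word (n : nat) := seq 'I_n.

(* full bracketings by [,]^-: binary trees whose leaves are letters *)
Inductive btree (n : nat) := BLeaf of 'I_n | BNode of btree n & btree n.
Arguments BLeaf {n}. Arguments BNode {n}.

Section Nichols.
Variables (F : fieldType) (n : nat) (q : 'I_n -> 'I_n -> F).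
Local Notation word := (word n).
Definition lc := seq (F * word).

Definition lc_coef (x : lc) (v : word) : F := \sum_(t <- x | t.2 == v) t.1.

Definition lc_mono (w : word) : lc := [:: (1, w)].
Definition lc_add (x y : lc) : lc := x ++ y.
Definition lc_opp (x : lc) : lc := [seq (- t.1, t.2) | t <- x].
Definition lc_mul (x y : lc) : lc := [seq (t.1 * s.1, t.2 ++ s.2) | t <- x, s <- y].

Definition lc_comm (x y : lc) : lc := lc_add (lc_mul x y) (lc_opp (lc_mul y x)).

(* Braid (Matsumoto) lift T_s of a permutation s of the d = size w tensor
   positions, acting on x_{w_1} (x) ... (x) x_{w_d}: the letter at position a
   moves to position s a, and every pair a < b whose order is swapped
   contributes the factor q (w_a) (w_b). *)
Definition permw (w : word) (s : {perm 'I_(size w)}) : word :=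
  [seq tnth (in_tuple w) ((s^-1)%g k) | k <- enum 'I_(size w)].

Definition invcoef (w : word) (s : {perm 'I_(size w)}) : F :=
  \prod_(a : 'I_(size w))
     \prod_(b : 'I_(size w) | (a < b)%N && (s b < s a)%N)
        q (tnth (in_tuple w) a) (tnth (in_tuple w) b).

Definition qsym (x : lc) : lc :=
  flatten [seq [seq (t.1 * invcoef s, permw s) | s <- enum {perm 'I_(size t.2)}]
          | t <- x].

(* Nichols algebra B(V) = T(V) / (direct sum over d of ker Omega_d).
   x represents 0 in B(V) iff Omega x = 0 in T(V). *)
Definition nichols_zero (x : lc) : Prop := forall v : word, lc_coef (qsym x) v = 0.

Definition dynkin_adj : rel 'I_n :=
  fun i j => (i != j) && ((q i j != 1) || (q j i != 1)).

Definition induced_rel (S : {set 'I_n}) : rel 'I_n :=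
  fun i j => [&& dynkin_adj i j, i \in S & j \in S].

Definition induced_connected (S : {set 'I_n}) : bool :=
  [forall x in S, forall y in S, connect (induced_rel S) x y].

Fixpoint leaves (t : btree n) : word :=
  match t with BLeaf i => [:: i] | BNode l r => leaves l ++ leaves r end.

Fixpoint bracket_eval (t : btree n) : lc :=
  match t with
  | BLeaf i => lc_mono [:: i]
  | BNode l r => lc_comm (bracket_eval l) (bracket_eval r)
  end.

End Nichols.

From HB Require Import structures.
From mathcomp Require Import all_boot all_order all_algebra all_fingroup zify.
Set Implicit Arguments. Unset Strict Implicit. Unset Printing Implicit Defensive.
Import GRing.Theory.
Local Open Scope ring_scope.

(* The symmetrizer cannot tell apart two words that differ by swapping
   adjacent letters x_i x_j with i = j or q_ij = q_ji = 1: reindexing the sum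
   over permutations by the transposition leaves every braiding factor
   unchanged.  This gives (i) at once.  For (ii), if all letters coincide then
   every word of sigma is u itself, and the coefficients of a bracket sum to 0.
   Otherwise split the letters into a connected component P of the induced
   graph and the rest: letters across the split have trivial braiding, so each
   word is equivalent to its P-subword followed by its non-P-subword, and
   Omega sigma only depends on the coefficients of sigma summed over words
   with the same pair of subwords.  These sums vanish for any bracketing whose
   leaves meet both classes, by induction on the bracketing: the bracket of a
   pure-P piece with a pure-non-P piece commutes the two, and a mixed factor
   passes its vanishing on to a product. *)

Lemma tperm_succ_inversion d (k k' a b : 'I_d) : k' = k.+1 :> nat ->
  (a < b)%N != (tperm k k' a < tperm k k' b)%N ->
  (a == k) && (b == k') || (a == k') && (b == k).
Proof.
move=> e; case: tpermP => [->|->|/eqP + /eqP]; case: tpermP => [->|->|/eqP + /eqP];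
  rewrite -?(inj_eq val_inj) /= ?e; lia.
Qed.

Lemma nth_cat_swap (T : Type) (x0 : T) p s (i j : T) k :
  k != size p -> k != (size p).+1 ->
  nth x0 (p ++ [:: i, j & s]) k = nth x0 (p ++ [:: j, i & s]) k.
Proof.
move=> k_p k_p1; rewrite !nth_cat; case: ltnP => // le_p_k.
by case E: (k - size p)%N => [|[|m]] //; lia.
Qed.

Section QuantumSymmetrizer.
Variables (F : fieldType) (n : nat) (q : 'I_n -> 'I_n -> F).

Definition braid_trivial (i j : 'I_n) := q i j = 1 /\ q j i = 1.

Definition qsym_coef d (f : 'I_d -> 'I_n) (v : word n) : F :=
  \sum_(s <- enum {perm 'I_d} | [seq f ((s^-1)%g k) | k <- enum 'I_d] == v)
     \prod_(a : 'I_d) \prod_(b : 'I_d | (a < b)%N && (s b < s a)%N) q (f a) (f b).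

Definition qsym_word_coef (w : word n) := qsym_coef (tnth (in_tuple w)).

Lemma lc_coef_cat (x y : lc F n) v : lc_coef (x ++ y) v = lc_coef x v + lc_coef y v.
Proof. by rewrite /lc_coef big_cat. Qed.

Lemma lc_coef_qsym (x : lc F n) v :
  lc_coef (qsym q x) v = \sum_(t <- x) t.1 * qsym_word_coef t.2 v.
Proof.
elim: x => [|t x IHx]; first by rewrite /lc_coef /qsym !big_nil.
rewrite /qsym /= -/(qsym q x) lc_coef_cat IHx big_cons; congr (_ + _).
by rewrite /lc_coef big_map mulr_sumr.
Qed.

Lemma eq_qsym_coef d (f g : 'I_d -> 'I_n) v : f =1 g -> qsym_coef f v = qsym_coef g v.
Proof.
move=> fg; apply: eq_big => [s | s _]; first by rewrite (eq_map (fun k => fg _)).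
by apply: eq_bigr => a _; apply: eq_bigr => b _; rewrite !fg.
Qed.

Lemma qsym_coef_cast d d' (e : d = d') (f : 'I_d -> 'I_n) (f' : 'I_d' -> 'I_n) v :
  (forall k, f k = f' (cast_ord e k)) -> qsym_coef f v = qsym_coef f' v.
Proof. by case: d' / e f' => f' ff'; apply: eq_qsym_coef => k; rewrite ff' cast_ord_id. Qed.

(* Reindex by [s |-> tau * s]: a pair changes its inversion status only if
   [tau] inverts it, and then its braiding factor is [1]. *)
Lemma qsym_coef_perm d (f : 'I_d -> 'I_n) (tau : {perm 'I_d}) v :
  (forall a b : 'I_d, (a < b)%N != (tau a < tau b)%N -> q (f (tau a)) (f (tau b)) = 1) ->
  qsym_coef (f \o tau) v = qsym_coef f v.
Proof.
move=> tau_inv; rewrite /qsym_coef !big_enum_cond /=.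
rewrite (reindex_inj (h := fun s => (tau * s)%g)) /=; last exact: mulgI.
apply: eq_big => [s | s _].
  by congr (_ == _); apply: eq_map => k; rewrite /= invMg permM permKV.
rewrite [RHS](reindex_inj (@perm_inj _ tau)); apply: eq_bigr => a _.
rewrite [RHS](reindex_inj (@perm_inj _ tau)) big_mkcond [RHS]big_mkcond.
apply: eq_bigr => b _ /=; rewrite !permM.
have [-> // | inv_ab] := eqVneq (a < b)%N (tau a < tau b)%N.
by rewrite tau_inv //; do 2!case: ifP.
Qed.

Lemma qsym_word_coef_swap p s i j v : i = j \/ braid_trivial i j ->
  qsym_word_coef (p ++ [:: i, j & s]) v = qsym_word_coef (p ++ [:: j, i & s]) v.
Proof.
case=> [-> // | [qij qji]].
set w := p ++ _; set w' := p ++ _.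
have e : size w = size w' by rewrite !size_cat.
have lt_p : (size p < size w)%N by rewrite size_cat /=; lia.
have lt_p1 : ((size p).+1 < size w)%N by rewrite size_cat /=; lia.
pose k := Ordinal lt_p; pose k' := Ordinal lt_p1.
have w_k : tnth (in_tuple w) k = i by rewrite (tnth_nth i) nth_cat ltnn subnn.
have w_k' : tnth (in_tuple w) k' = j by rewrite (tnth_nth i) nth_cat ltnNge leqnSn subSnn.
rewrite /qsym_word_coef -(qsym_coef_perm (tau := tperm k k')); last first.
  move=> a b /(tperm_succ_inversion (k := k) (k' := k') erefl).
  by case/orP=> /andP[/eqP-> /eqP->]; rewrite tpermL tpermR w_k w_k'.
apply: (qsym_coef_cast (e := e)) => m /=; rewrite !(tnth_nth i) /=.
case: tpermP => [-> | -> | m_k m_k'].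
- by rewrite nth_cat ltnNge leqnSn subSnn nth_cat ltnn subnn.
- by rewrite nth_cat ltnn subnn nth_cat ltnNge leqnSn subSnn.
by apply: nth_cat_swap; apply/eqP=> eq_m; [apply: m_k | apply: m_k']; apply: val_inj.
Qed.

Definition qsym_equiv (w w' : word n) :=
  forall p s v, qsym_word_coef (p ++ w ++ s) v = qsym_word_coef (p ++ w' ++ s) v.

Lemma qsym_equiv_refl w : qsym_equiv w w. Proof. by []. Qed.

Lemma qsym_equiv_sym w w' : qsym_equiv w w' -> qsym_equiv w' w.
Proof. by move=> ww' p s v; rewrite ww'. Qed.

Lemma qsym_equiv_trans w1 w2 w3 :
  qsym_equiv w1 w2 -> qsym_equiv w2 w3 -> qsym_equiv w1 w3.
Proof. by move=> w12 w23 p s v; rewrite w12 w23. Qed.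

Lemma qsym_equiv_cat a b w w' : qsym_equiv w w' -> qsym_equiv (a ++ w ++ b) (a ++ w' ++ b).
Proof. by move=> ww' p s v; have := ww' (p ++ a) (b ++ s) v; rewrite -!catA. Qed.

Lemma qsym_equiv_cons a w w' : qsym_equiv w w' -> qsym_equiv (a :: w) (a :: w').
Proof. by move/(qsym_equiv_cat [:: a] [::]); rewrite !cats0. Qed.

Lemma qsym_equiv_catr b w w' : qsym_equiv w w' -> qsym_equiv (w ++ b) (w' ++ b).
Proof. exact: qsym_equiv_cat [::] b w w'. Qed.

Lemma qsym_equiv_coef w w' v : qsym_equiv w w' -> qsym_word_coef w v = qsym_word_coef w' v.
Proof. by move=> ww'; have := ww' [::] [::] v; rewrite !cats0. Qed.

Lemma qsym_equiv_swap i j : i = j \/ braid_trivial i j -> qsym_equiv [:: i; j] [:: j; i].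
Proof. by move=> ij p s v; apply: qsym_word_coef_swap. Qed.

Lemma qsym_equiv_move_front u y : (forall x, x \in u -> x = y \/ braid_trivial x y) ->
  qsym_equiv (u ++ [:: y]) (y :: u).
Proof.
elim: u => [|x u IHu] uy /=; first exact: qsym_equiv_refl.
apply: (qsym_equiv_trans (w2 := [:: x, y & u])).
  by apply/qsym_equiv_cons/IHu => z zu; apply: uy; rewrite inE zu orbT.
by apply: (qsym_equiv_catr u (qsym_equiv_swap _)); apply: uy; rewrite mem_head.
Qed.

Lemma qsym_equiv_filter_split (P : pred 'I_n) w :
  (forall x y, x \in w -> y \in w -> P x -> ~~ P y -> braid_trivial x y) ->
  qsym_equiv w (filter P w ++ filter (predC P) w).
Proof.
elim: w => [|a w IHw] cross /=; first exact: qsym_equiv_refl.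
apply: (qsym_equiv_trans (qsym_equiv_cons a (IHw _))).
  by move=> x y xw yw; apply: cross; rewrite inE (xw, yw) orbT.
case: ifP => Pa /=; first exact: qsym_equiv_refl.
apply/qsym_equiv_sym; rewrite -cat_rcons -cats1.
apply: (qsym_equiv_catr _ (w' := a :: filter P w)).
apply: qsym_equiv_move_front => x; rewrite mem_filter => /andP[Px xw]; right.
by apply: cross; rewrite ?inE ?xw ?eqxx ?orbT ?Pa.
Qed.

Lemma qsym_equiv_catC u v :
  (forall x y, x \in u -> y \in v -> x != y -> braid_trivial x y) ->
  qsym_equiv (u ++ v) (v ++ u).
Proof.
elim: v => [|y v IHv] cross /=; first by rewrite cats0; exact: qsym_equiv_refl.
apply: (qsym_equiv_trans (w2 := y :: u ++ v)).
  rewrite -cat_rcons -cats1; apply: (qsym_equiv_catr _ (w' := y :: u)).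
  apply: qsym_equiv_move_front => x xu.
  by have [-> | xy] := eqVneq x y; [left | right; apply: cross; rewrite ?mem_head].
by apply/qsym_equiv_cons/IHv => x z xu zv; apply: cross; rewrite // inE zv orbT.
Qed.

End QuantumSymmetrizer.

Lemma eqseq_cat_sizer (T : eqType) (a c k : seq T) :
  (a ++ c == k) = (a == take (size k - size c) k) && (c == drop (size k - size c) k).
Proof.
apply/eqP/andP => [<- | [/eqP a_k /eqP c_k]]; last by rewrite {1}a_k {2}c_k cat_take_drop.
by rewrite size_cat addnK take_size_cat // drop_size_cat.
Qed.

Lemma eqseq_cat_sizel (T : eqType) (c a k : seq T) :
  (c ++ a == k) = (c == take (size c) k) && (a == drop (size c) k).
Proof.
apply/eqP/andP => [<- | [/eqP c_k /eqP a_k]]; last by rewrite a_k {1}c_k cat_take_drop.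
by rewrite take_size_cat // drop_size_cat.
Qed.

Section LinearCombinations.
Variables (F : fieldType) (n : nat).
Implicit Types (x y : lc F n).

Definition lc_total x : F := \sum_(t <- x) t.1.

Lemma lc_total_mul x y : lc_total (lc_mul x y) = lc_total x * lc_total y.
Proof.
rewrite /lc_total big_allpairs_dep mulr_suml; apply: eq_bigr => t _.
by rewrite mulr_sumr.
Qed.

Lemma lc_total_comm x y : lc_total (lc_comm x y) = 0.
Proof.
rewrite /lc_total big_cat big_map sumrN -!/(lc_total _) !lc_total_mul mulrC.
exact: subrr.
Qed.

Definition lc_fiber (T : eqType) (g : word n -> T) x (k : T) : F :=
  \sum_(t <- x | g t.2 == k) t.1.

Lemma lc_fiber_add (T : eqType) (g : word n -> T) x y k :
  lc_fiber g (lc_add x y) k = lc_fiber g x k + lc_fiber g y k.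
Proof. by rewrite /lc_fiber big_cat. Qed.

Lemma lc_fiber_opp (T : eqType) (g : word n -> T) x k :
  lc_fiber g (lc_opp x) k = - lc_fiber g x k.
Proof. by rewrite /lc_fiber big_map sumrN. Qed.

Lemma lc_fiber_comm_eq0 (T : eqType) (g : word n -> T) x y :
  (forall t s, t \in x -> s \in y -> g (t.2 ++ s.2) = g (s.2 ++ t.2)) ->
  forall k, lc_fiber g (lc_comm x y) k = 0.
Proof.
move=> gC k; rewrite lc_fiber_add lc_fiber_opp; apply/eqP; rewrite subr_eq0; apply/eqP.
rewrite /lc_fiber big_mkcond [RHS]big_mkcond !big_allpairs_dep /= exchange_big /=.
by apply: eq_big_seq => s sy; apply: eq_big_seq => t tx; rewrite gC // mulrC.
Qed.

Lemma weighted_sum_eq0_of_fibers (T : eqType) (g : word n -> T) (H : T -> F) x :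
  (forall k, lc_fiber g x k = 0) -> \sum_(t <- x) t.1 * H (g t.2) = 0.
Proof.
move=> fiber0; rewrite /lc_fiber in fiber0; set K := undup [seq g t.2 | t <- x].
transitivity (\sum_(t <- x) \sum_(k <- K) (if g t.2 == k then t.1 * H k else 0)).
  apply: eq_big_seq => t tx.
  have gK : g t.2 \in K by rewrite mem_undup; apply/mapP; exists t.
  rewrite (bigD1_seq (g t.2) gK (undup_uniq _)) /= eqxx big1 ?addr0 // => k.
  by rewrite eq_sym => /negbTE ->.
rewrite exchange_big /= big1 // => k _.
by rewrite -big_mkcond /= -mulr_suml fiber0 mul0r.
Qed.

Definition split_key (P : pred 'I_n) (w : word n) := (filter P w, filter (predC P) w).

Lemma split_key_cat P a b :
  split_key P (a ++ b) = ((split_key P a).1 ++ (split_key P b).1,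
                          (split_key P a).2 ++ (split_key P b).2).
Proof. by rewrite /split_key !filter_cat. Qed.

(* By [split_key_cat], each fiber of [lc_mul x y] is a combination of fibers
   of [x], and also of fibers of [y]. *)
Lemma lc_fiber_split_mull P x y : (forall k, lc_fiber (split_key P) x k = 0) ->
  forall k, lc_fiber (split_key P) (lc_mul x y) k = 0.
Proof.
move=> fiber0 [k1 k2]; rewrite /lc_fiber in fiber0 *; rewrite big_mkcond big_allpairs_dep /= exchange_big /=.
apply: big1 => s _; set c := split_key P s.2.
pose k' := (take (size k1 - size c.1) k1, take (size k2 - size c.2) k2).
pose D := (c.1 == drop (size k1 - size c.1) k1) && (c.2 == drop (size k2 - size c.2) k2).
transitivity (\sum_(t <- x) (if D then (if split_key P t.2 == k' then t.1 else 0) * s.1 else 0)).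
  apply: eq_bigr => t _; rewrite split_key_cat !xpair_eqE !eqseq_cat_sizer -/c /D /k'.
  by do 4!case: (_ == _); rewrite ?mul0r.
case: D; last by rewrite big1.
by rewrite -mulr_suml -big_mkcond /= fiber0 mul0r.
Qed.

Lemma lc_fiber_split_mulr P x y : (forall k, lc_fiber (split_key P) y k = 0) ->
  forall k, lc_fiber (split_key P) (lc_mul x y) k = 0.
Proof.
move=> fiber0 [k1 k2]; rewrite /lc_fiber in fiber0 *; rewrite big_mkcond big_allpairs_dep /=.
apply: big1 => t _; set c := split_key P t.2.
pose k' := (drop (size c.1) k1, drop (size c.2) k2).
pose D := (c.1 == take (size c.1) k1) && (c.2 == take (size c.2) k2).
transitivity (\sum_(s <- y) (if D then t.1 * (if split_key P s.2 == k' then s.1 else 0) else 0)).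
  apply: eq_bigr => s _; rewrite split_key_cat !xpair_eqE !eqseq_cat_sizel -/c /D /k'.
  by do 4!case: (_ == _); rewrite ?mulr0.
case: D; last by rewrite big1.
by rewrite -mulr_sumr -big_mkcond /= fiber0 mulr0.
Qed.

Lemma lc_fiber_split_comml P x y : (forall k, lc_fiber (split_key P) x k = 0) ->
  forall k, lc_fiber (split_key P) (lc_comm x y) k = 0.
Proof.
move=> fiber0 k.
rewrite lc_fiber_add lc_fiber_opp (lc_fiber_split_mull _ fiber0) (lc_fiber_split_mulr _ fiber0).
by rewrite oppr0 addr0.
Qed.

Lemma lc_fiber_split_commr P x y : (forall k, lc_fiber (split_key P) y k = 0) ->
  forall k, lc_fiber (split_key P) (lc_comm x y) k = 0.
Proof.
move=> fiber0 k.
rewrite lc_fiber_add lc_fiber_opp (lc_fiber_split_mull _ fiber0) (lc_fiber_split_mulr _ fiber0).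
by rewrite oppr0 addr0.
Qed.

End LinearCombinations.

Section Brackets.
Variables (F : fieldType) (n : nat).

Lemma perm_eq_bracket_eval (t : btree n) (u : F * word n) :
  u \in bracket_eval F t -> perm_eq u.2 (leaves t).
Proof.
elim: t u => [i | l IHl r IHr] u /=; first by rewrite inE => /eqP->.
rewrite mem_cat => /orP[/allpairsP[[a b] [/= al br ->]] |
                        /mapP[_ /allpairsP[[a b] [/= ar bl ->]] ->]] /=.
  by rewrite perm_cat ?IHl ?IHr.
by rewrite perm_catC perm_cat ?IHl ?IHr.
Qed.

Lemma lc_total_bracket_eval (t : btree n) :
  (2 <= size (leaves t))%N -> lc_total (bracket_eval F t) = 0.
Proof. by case: t => [//|l r] _; apply: lc_total_comm. Qed.

Lemma split_key_catC (P : pred 'I_n) (a b : word n) :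
  (all P a && all (predC P) b) || (all (predC P) a && all P b) ->
  split_key P (a ++ b) = split_key P (b ++ a).
Proof.
have filter_nil (Q : pred 'I_n) c : all (predC Q) c -> filter Q c = [::].
  by move=> cNQ; apply/eqP; rewrite -[_ == _]negbK -has_filter -all_predC cNQ.
have filterC_nil c : all P c -> filter (predC P) c = [::].
  by move=> cP; apply: filter_nil; rewrite (eq_all (a2 := P)) // => z /=; rewrite negbK.
rewrite /split_key !filter_cat => /orP[]/andP[a_P b_P].
  by rewrite (filterC_nil _ a_P) (filter_nil _ _ b_P) /= !cats0.
by rewrite (filterC_nil _ b_P) (filter_nil _ _ a_P) /= !cats0.
Qed.

Lemma lc_fiber_bracket_eval_mixed (P : pred 'I_n) (t : btree n) :
  has P (leaves t) -> has (predC P) (leaves t) ->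
  forall k, lc_fiber (split_key P) (bracket_eval F t) k = 0.
Proof.
elim: t => [i | l IHl r IHr] /=; first by rewrite !orbF => ->.
rewrite !has_cat => hasP hasNP k.
have [/andP[lP lNP] | pure_l] := boolP (has P (leaves l) && has (predC P) (leaves l)).
  exact: lc_fiber_split_comml (IHl lP lNP) k.
have [/andP[rP rNP] | pure_r] := boolP (has P (leaves r) && has (predC P) (leaves r)).
  exact: lc_fiber_split_commr (IHr rP rNP) k.
apply: lc_fiber_comm_eq0 => u s ul sr; apply: split_key_catC.
rewrite !(perm_all _ (perm_eq_bracket_eval ul)) !(perm_all _ (perm_eq_bracket_eval sr)).
have allE c : all P c = ~~ has (predC P) c by rewrite has_predC negbK.
rewrite !allE !all_predC; move: hasP hasNP pure_l pure_r.
by do 4!case: has.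
Qed.

End Brackets.

Section NicholsVanishing.
Variables (F : fieldType) (n : nat) (q : 'I_n -> 'I_n -> F).

Lemma nichols_zero_comm_mono (u v : word n) :
  (forall i j, i \in u -> j \in v -> i != j -> braid_trivial q i j) ->
  nichols_zero q (lc_comm (lc_mono F u) (lc_mono F v)).
Proof.
move=> cross w; rewrite lc_coef_qsym /= !big_cons big_nil /=.
by rewrite (qsym_equiv_coef w (qsym_equiv_catC cross)) mulr1 mul1r mulN1r addr0 subrr.
Qed.

Lemma nichols_zero_bracket_const (t : btree n) :
  (2 <= size (leaves t))%N -> size (undup (leaves t)) = 1%N ->
  nichols_zero q (bracket_eval F t).
Proof.
move=> t_size t_const v; rewrite lc_coef_qsym.
have [i undup_i] : exists i, undup (leaves t) = [:: i].
  by case: undup t_const => [|i [|]] // _; exists i.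
have t_i : all (pred1 i) (leaves t) by apply/allP => z; rewrite -mem_undup undup_i inE.
have word_t u : u \in bracket_eval F t -> u.2 = leaves t.
  move=> /perm_eq_bracket_eval u_t.
  have u_i : all (pred1 i) u.2 by rewrite (perm_all _ u_t).
  by rewrite (all_pred1P _ _ u_i) (all_pred1P _ _ t_i) (perm_size u_t).
rewrite (eq_big_seq (fun u => u.1 * qsym_word_coef q (leaves t) v)) => [|u /word_t->] //.
by rewrite -mulr_suml -/(lc_total _) lc_total_bracket_eval ?mul0r.
Qed.

Lemma nichols_zero_bracket_split (P : pred 'I_n) (t : btree n) :
  has P (leaves t) -> has (predC P) (leaves t) ->
  (forall a b, a \in leaves t -> b \in leaves t -> P a -> ~~ P b -> braid_trivial q a b) ->
  nichols_zero q (bracket_eval F t).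
Proof.
move=> hasP hasNP cross v; rewrite lc_coef_qsym.
pose H k := qsym_word_coef q (k.1 ++ k.2) v.
rewrite -[RHS](weighted_sum_eq0_of_fibers H (lc_fiber_bracket_eval_mixed F hasP hasNP)).
apply: eq_big_seq => u /perm_eq_bracket_eval u_t; congr (_ * _).
apply/qsym_equiv_coef/qsym_equiv_filter_split => a b au bu.
by apply: cross; rewrite -(perm_mem u_t).
Qed.

Lemma disconnected_split (S : {set 'I_n}) : ~~ induced_connected q S ->
  exists P : pred 'I_n, [/\ exists2 x, x \in S & P x, exists2 y, y \in S & ~~ P y &
    forall a b, a \in S -> b \in S -> P a -> ~~ P b -> braid_trivial q a b].
Proof.
case/forall_inPn=> x xS /forall_inPn[y yS xNy].
exists [pred z | connect (induced_rel q S) x z]; split; first by exists x; rewrite //= connect0.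
  by exists y.
move=> a b aS bS /= xa xNb.
have ab : a != b by apply: contraNneq xNb => <-.
have : ~~ induced_rel q S a b by apply: contra xNb => /connect1; apply: connect_trans.
rewrite /induced_rel /dynkin_adj ab aS bS /= !andbT negb_or !negbK.
by case/andP=> /eqP qab /eqP qba; split.
Qed.

End NicholsVanishing.

Unset Implicit Arguments.

Theorem proposition6p5 (F : closedFieldType) (hchar : [pchar F] =i pred0)
    (n : nat) (q : 'I_n -> 'I_n -> F) (hq : forall i j, q i j != 0) :
  (* (i) *)
  (forall u v : word n,
     (forall i j, i \in u -> j \in v -> i != j -> q i j = 1 /\ q j i = 1) ->
     nichols_zero q (lc_comm (lc_mono F u) (lc_mono F v)))
  /\
  (* (ii): h_1..h_m = leaves t, sigma = the bracketing t *)
  (forall t : btree n,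
     (2 <= size (leaves t))%N ->
     (size (undup (leaves t)) = 1%N \/
      ~~ induced_connected q [set i | i \in leaves t]) ->
     nichols_zero q (bracket_eval F t)).
Proof.
split=> [u v | t t_size [t_const | t_disconnected]].
- exact: nichols_zero_comm_mono.
- exact: nichols_zero_bracket_const.
have [P [[x xt Px] [y yt NPy] cross]] := disconnected_split t_disconnected.
rewrite !inE in xt yt.
apply: (nichols_zero_bracket_split (P := P)); first by apply/hasP; exists x.
  by apply/hasP; exists y.
by move=> a b a_t b_t; apply: cross; rewrite inE.
Qed.
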